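(* Under the setting and assumptions (A1)–(A5) described in the context, define for $t\ge 0$ \[ S(t)=\tilde S e^{(\beta/\gamma)\tilde R}\varphi^{-1}(t),\qquad E(t)=\tilde E e^{-\delta t}+\tilde S e^{(\beta/\gamma)\tilde R}e^{-\delta t}\int_{\varphi^{-1}(t)}^{e^{-(\beta/\gamma)\tilde R}}e^{\delta\varphi(v)}\,dv, \] \[ I(t)=N-\tilde S e^{(\beta/\gamma)\tilde R}\varphi^{-1}(t)+\frac{\gamma}{\beta}\log\varphi^{-1}(t)-\tilde E e^{-\delta t}-\tilde S e^{(\beta/\gamma)\tilde R}e^{-\delta t}\int_{\varphi^{-1}(t)}^{e^{-(\beta/\gamma)\tilde R}}e^{\delta\varphi(v)}\,dv, \qquad R(t)=-\frac{\gamma}{\beta}\log\varphi^{-1}(t). \] Then $(S(t),E(t),I(t),R(t))$ is a solution of the initial value problem $S'=-\beta SI$, $E'=\beta SI-\delta E$, $I'=\delta E-\gamma I$, $R'=\gamma I$ for $t>0$, with $S(0)=\tilde S$, $E(0)=\tilde E$, $I(0)=\tilde I$, $R(0)=\tilde R$.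
   Context: Let $\beta,\gamma,\delta>0$ be constants and $\tilde S,\tilde E,\tilde I,\tilde R$ real numbers with $N:=\tilde S+\tilde E+\tilde I+\tilde R>0$. The SEIR initial value problem is $S'(t)=-\beta S(t)I(t)$, $E'(t)=\beta S(t)I(t)-\delta E(t)$, $I'(t)=\delta E(t)-\gamma I(t)$, $R'(t)=\gamma I(t)$ for $t>0$, with $S(0)=\tilde S$, $E(0)=\tilde E$, $I(0)=\tilde I$, $R(0)=\tilde R$; a solution is a vector function $(S,E,I,R)$ of class $C^1(0,\infty)\cap C[0,\infty)$ satisfying these. Standing assumptions: (A1) $\tilde I>0$; (A2) $\tilde E>(\gamma/\delta)\tilde I$; (A3) $\tilde S>\delta\tilde E/(\beta\tilde I)$; (A4) $\tilde R\ge 0$ and $N>\tilde S e^{(\beta/\gamma)\tilde R}+\tilde R$. Let $\alpha$ be the unique solution in $(\tilde R,N)$ of $x=N-\tilde S e^{(\beta/\gamma)\tilde R}e^{-(\beta/\gamma)x}$, and assume (A5) $\tilde S<(\gamma/\beta)e^{(\beta/\gamma)(\alpha-\tilde R)}$. Put $u_0:=e^{-(\beta/\gamma)\tilde R}$, $u_\infty:=e^{-(\beta/\gamma)\alpha}$ (so $0<u_\infty<u_0$). Let $\psi$ be the unique function, continuous and positive on $(u_\infty,u_0]$ and $C^1$ on $(u_\infty,u_0)$, satisfying the Abel equation $\psi'(u)\psi(u)-\frac{\gamma+\delta}{u}\psi(u)=-\delta\,\frac{\beta N-\beta\tilde S e^{(\beta/\gamma)\tilde R}u+\gamma\log u}{u}$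 for $u\in(u_\infty,u_0)$ and $\psi(u_0)=\beta\tilde I$. Let $\varphi(u):=\int_u^{u_0}\frac{d\xi}{\xi\psi(\xi)}$ for $u\in(u_\infty,u_0]$; $\varphi$ is a strictly decreasing continuous bijection from $(u_\infty,u_0]$ onto $[0,\infty)$, of class $C^1$ on $(u_\infty,u_0)$, and $\varphi^{-1}:[0,\infty)\to(u_\infty,u_0]$ denotes its inverse. *)

From Stdlib Require Import Reals Lra ClassicalEpsilon.
From Coquelicot Require Import Coquelicot.
Open Scope R_scope.

Definition continuous_on_set (D : R -> Prop) (f : R -> R) : Prop :=
  forall x, D x -> forall eps, 0 < eps -> exists delta, 0 < delta /\
    forall y, D y -> Rabs (y - x) < delta -> Rabs (f y - f x) < eps.

Definition C1_on_with (D : R -> Prop) (f f' : R -> R) : Prop :=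
  forall x, D x -> is_derive f x (f' x) /\ continuous f' x.

Definition phi (psi : R -> R) (u0 u : R) : R :=
  RInt (fun xi => / (xi * psi xi)) u u0.

(* phi^{-1}(t): the point u of (uinf, u0] with phi(u) = t (chosen by
   Hilbert's epsilon; it is unique since phi is a bijection). *)
Definition phi_inv (psi : R -> R) (uinf u0 t : R) : R :=
  epsilon (inhabits 0) (fun u => uinf < u <= u0 /\ phi psi u0 u = t).

Definition SEIR_solution (beta gamma delta S0 E0 I0 R0 : R)
    (S E I Rf : R -> R) : Prop :=
  continuous_on_set (fun t => 0 <= t) S /\
  continuous_on_set (fun t => 0 <= t) E /\
  continuous_on_set (fun t => 0 <= t) I /\
  continuous_on_set (fun t => 0 <= t) Rf /\
  (exists S' E' I' R' : R -> R,
     C1_on_with (fun t => 0 < t) S S' /\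
     C1_on_with (fun t => 0 < t) E E' /\
     C1_on_with (fun t => 0 < t) I I' /\
     C1_on_with (fun t => 0 < t) Rf R' /\
     forall t, 0 < t ->
       S' t = - beta * S t * I t /\
       E' t = beta * S t * I t - delta * E t /\
       I' t = delta * E t - gamma * I t /\
       R' t = gamma * I t) /\
  S 0 = S0 /\ E 0 = E0 /\ I 0 = I0 /\ Rf 0 = R0.

(* The substitution u = e^{-(beta/gamma) R} reduces the system to the scalar equation
   u' = - u psi(u), solved by u(t) = phi^{-1}(t) since phi'(u) = - 1 / (u psi(u)).
   With F(u) = beta N - beta K u + gamma log u and K = St e^{(beta/gamma) Rt}, the Abel
   equation for psi says exactly that
     (F(u) - psi(u)) / beta * e^{delta phi(u)} - K int_u^{u0} e^{delta phi}
   is constant on (uinf, u0], equal to Et at u0.  Evaluated at u = u(t) this conservation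
   law gives I(t) = psi(u(t)) / beta, and then each equation of the system is a
   chain-rule computation.  The conservation law also gives psi < F, and F, being concave
   with F(uinf) = 0, lies below its tangent c (u - uinf) at uinf; hence phi grows at least
   like -log(u - uinf) / (u0 c), so phi^{-1} is defined on all of [0, +oo). *)

From Stdlib Require Import Reals Lra ClassicalEpsilon.
From Coquelicot Require Import Coquelicot.
Open Scope R_scope.

(** * Real analysis *)

Lemma locally_gt (a x : R) : a < x -> locally x (fun y => a < y).
Proof. intros Hx. now apply (locally_interval _ x a p_infty). Qed.

Lemma continuity_pt_of_is_derive (f : R -> R) (x l : R) :
  is_derive f x l -> continuity_pt f x.
Proof.
  intros Hf. apply continuity_pt_filterlim, (ex_derive_continuous (V := R_NormedModule)).
  now exists l.
Qed.

Lemma continuity_pt_Rmin_l (c x : R) : continuity_pt (fun y => Rmin y c) x.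
Proof.
  apply continuity_pt_locally; intros eps. exists eps; intros y Hy.
  change (Rabs (y - x) < eps) in Hy. revert Hy.
  unfold Rmin, Rabs; repeat destruct Rle_dec; repeat destruct Rcase_abs; lra.
Qed.

Lemma continuity_pt_Rmax_l (c x : R) : continuity_pt (fun y => Rmax y c) x.
Proof.
  apply continuity_pt_locally; intros eps. exists eps; intros y Hy.
  change (Rabs (y - x) < eps) in Hy. revert Hy.
  unfold Rmax, Rabs; repeat destruct Rle_dec; repeat destruct Rcase_abs; lra.
Qed.

Lemma continuous_on_set_of_continuity_pt (D : R -> Prop) (f : R -> R) :
  (forall x, D x -> continuity_pt f x) -> continuous_on_set D f.
Proof.
  intros Hf x Hx eps Heps.
  destruct (proj1 (continuity_pt_locally f x) (Hf x Hx) (mkposreal eps Heps))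
    as [d Hd].
  exists d; split; [apply cond_pos |]. intros y _ Hy. now apply Hd.
Qed.

Lemma continuity_pt_comp_on_set (D : R -> Prop) (f c : R -> R) (x : R) :
  continuous_on_set D f -> continuity_pt c x -> D (c x) ->
  locally x (fun y => D (c y)) -> continuity_pt (fun y => f (c y)) x.
Proof.
  intros Hf Hc Hcx HD. apply continuity_pt_locally; intros eps.
  destruct (Hf (c x) Hcx eps (cond_pos eps)) as [d [Hd Hfd]].
  pose proof (proj1 (continuity_pt_locally c x) Hc (mkposreal d Hd)) as Hcd.
  apply (filter_imp (fun y => D (c y) /\ Rabs (c y - c x) < d)).
  - intros y [HDy Hy]. now apply Hfd.
  - now apply filter_and.
Qed.

(* The slope [k / h] of [g] is the reciprocal of the slope [h / k] of [f] over the
   increment [k] of [g], and [k] tends to [0] with [h]. *)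
Lemma is_derive_inverse (f g : R -> R) (y d : R) :
  continuity_pt g y -> locally y (fun s => f (g s) = s) ->
  is_derive f (g y) d -> d <> 0 -> is_derive g y (/ d).
Proof.
  intros Hg [r Hfg] Hf Hd.
  apply is_derive_Reals in Hf. apply is_derive_Reals. intros eps Heps.
  assert (Hd2 : 0 < Rabs d) by now apply Rabs_pos_lt.
  set (m := Rmin (Rabs d / 2) (eps * (Rabs d * Rabs d) / 2)).
  assert (Hm : 0 < m).
  { assert (0 < eps * (Rabs d * Rabs d)) by (apply Rmult_lt_0_compat; nra).
    apply Rmin_pos; lra. }
  destruct (Hf m Hm) as [d' Hd'].
  destruct (proj1 (continuity_pt_locally g y) Hg d') as [d1 Hd1].
  assert (Hmin : 0 < Rmin d1 r) by (apply Rmin_pos; apply cond_pos).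
  exists (mkposreal _ Hmin); intros h Hh0 Hh; simpl in Hh.
  assert (Hyh : ball y r (y + h)).
  { change (Rabs (y + h - y) < r). replace (y + h - y) with h by ring.
    eapply Rlt_le_trans; [exact Hh | apply Rmin_r]. }
  assert (Hyy : ball y r y) by apply ball_center.
  set (k := g (y + h) - g y).
  assert (Hfk : f (g y + k) - f (g y) = h).
  { unfold k. replace (g y + (g (y + h) - g y)) with (g (y + h)) by ring.
    rewrite (Hfg _ Hyh), (Hfg _ Hyy). ring. }
  assert (Hk : k <> 0).
  { intros Hk0. rewrite Hk0, Rplus_0_r, Rminus_diag in Hfk. now apply Hh0. }
  assert (Hkd : Rabs k < d').
  { apply (Hd1 (y + h)). change (Rabs (y + h - y) < d1).
    replace (y + h - y) with h by ring. eapply Rlt_le_trans; [exact Hh | apply Rmin_l]. }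
  specialize (Hd' k Hk Hkd). rewrite Hfk in Hd'. fold k.
  set (q := h / k) in Hd'.
  assert (Hq1 : Rabs (q - d) < Rabs d / 2) by (eapply Rlt_le_trans; [exact Hd' | apply Rmin_l]).
  assert (Hq2 : Rabs (q - d) < eps * (Rabs d * Rabs d) / 2)
    by (eapply Rlt_le_trans; [exact Hd' | apply Rmin_r]).
  assert (Hq : Rabs d / 2 < Rabs q).
  { pose proof (Rabs_triang_inv d q). rewrite Rabs_minus_sym in Hq1. lra. }
  assert (Hq0 : q <> 0) by (intros E; rewrite E, Rabs_R0 in Hq; lra).
  replace (k / h - / d) with (- (q - d) / (q * d)) by (unfold q; field; auto).
  unfold Rdiv. rewrite Rabs_mult, Rabs_Ropp, Rabs_inv, Rabs_mult.
  apply (Rmult_lt_reg_r (Rabs q * Rabs d)); [nra |].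
  rewrite Rmult_assoc, Rinv_l, Rmult_1_r by nra.
  assert (eps * (Rabs d / 2 * Rabs d) <= eps * (Rabs q * Rabs d))
    by (apply Rmult_le_compat_l; [lra | apply Rmult_le_compat_r; lra]).
  lra.
Qed.

Lemma decreasing_of_derive_neg (f df : R -> R) (a : R) :
  (forall x, a < x -> is_derive f x (df x)) -> (forall x, a < x -> df x < 0) ->
  forall x y, a < x -> x < y -> f y < f x.
Proof.
  intros Hf Hdf x y Hx Hxy.
  destruct (MVT_gen f x y df) as [c [Hc Hfc]];
    rewrite Rmin_left, Rmax_right in * by lra.
  - intros z Hz. apply Hf. lra.
  - intros z Hz. apply (continuity_pt_of_is_derive _ _ (df z)), Hf. lra.
  - pose proof (Hdf c ltac:(lra)). nra.
Qed.

Lemma eq_of_derive_zero (f : R -> R) (a b : R) :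
  (forall x, a < x < b -> is_derive f x 0) ->
  (forall x, a < x <= b -> continuity_pt f x) ->
  forall x, a < x <= b -> f x = f b.
Proof.
  intros Hf Hc x Hx.
  destruct (Req_dec x b) as [-> | Hxb]; [reflexivity |].
  destruct (MVT_gen f x b (fun _ => 0)) as [c [_ Hfc]]; [| | lra];
    intros z Hz; rewrite Rmin_left, Rmax_right in Hz by lra.
  - apply Hf. lra.
  - apply Hc. lra.
Qed.

Lemma ex_RInt_continuity_pt_gt (f : R -> R) (a x y : R) :
  (forall z, a < z -> continuity_pt f z) -> a < x -> a < y -> ex_RInt f x y.
Proof.
  intros Hf Hx Hy. apply (ex_RInt_continuous (V := R_CompleteNormedModule)).
  intros z Hz. apply continuity_pt_filterlim, Hf.
  pose proof (Rmin_glb_lt x y a Hx Hy). lra.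
Qed.

Lemma is_derive_RInt_lower (f : R -> R) (a b x : R) :
  (forall z, a < z -> continuity_pt f z) -> a < b -> a < x ->
  is_derive (fun y => RInt f y b) x (- f x).
Proof.
  intros Hf Hb Hx. apply (is_derive_RInt' f (fun y => RInt f y b) x b).
  - apply (filter_imp (fun y => a < y)); [| now apply locally_gt].
    intros y Hy. apply (RInt_correct (V := R_CompleteNormedModule)).
    now apply (ex_RInt_continuity_pt_gt f a).
  - now apply continuity_pt_filterlim, Hf.
Qed.

Lemma continuous_onto_nonneg (f : R -> R) (a b : R) :
  (forall x, a < x -> continuity_pt f x) -> f b = 0 ->
  (forall t, exists u, a < u <= b /\ t <= f u) ->
  forall t, 0 <= t -> exists w, a < w <= b /\ f w = t.
Proof.
  intros Hf Hfb Hunb t Ht. destruct (Hunb t) as [u [Hu Htu]].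
  destruct (IVT_gen (fun x => f (Rmax x u)) u b t) as [w [Hw Hfw]].
  - intros x. apply (continuity_pt_comp (fun y => Rmax y u)).
    + apply continuity_pt_Rmax_l.
    + apply Hf. pose proof (Rmax_r x u). lra.
  - rewrite Rmax_left, (Rmax_left b u), Hfb by lra.
    rewrite Rmin_right, Rmax_left by lra. lra.
  - rewrite Rmin_left, Rmax_right in Hw by lra.
    rewrite Rmax_left in Hfw by lra. exists w. split; [lra | exact Hfw].
Qed.

(** * Inverse of a decreasing function *)

Section DecreasingInverse.

Variables (f g : R -> R) (a b : R).
Hypothesis f_decr : forall x y, a < x -> x < y -> f y < f x.
Hypothesis f_b : f b = 0.
Hypothesis g_spec : forall t, 0 <= t -> a < g t <= b /\ f (g t) = t.

Lemma inverse_gt (x s : R) : a < x -> 0 <= s -> s < f x -> x < g s.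
Proof.
  intros Hx Hs Hsx. destruct (g_spec s Hs) as [[Hgs _] Hfgs].
  destruct (Rtotal_order x (g s)) as [Hlt | [Heq | Hgt]]; [exact Hlt | |].
  - rewrite Heq, Hfgs in Hsx. lra.
  - pose proof (f_decr (g s) x Hgs Hgt). lra.
Qed.

Lemma inverse_lt (x s : R) : a < x -> 0 <= s -> f x < s -> g s < x.
Proof.
  intros Hx Hs Hsx. destruct (g_spec s Hs) as [_ Hfgs].
  destruct (Rtotal_order (g s) x) as [Hlt | [Heq | Hgt]]; [exact Hlt | |].
  - rewrite <- Heq, Hfgs in Hsx. lra.
  - pose proof (f_decr x (g s) Hx Hgt). lra.
Qed.

Lemma inverse_0 : g 0 = b.
Proof.
  destruct (g_spec 0 (Rle_refl 0)) as [[Hg0 [Hlt | Heq]] Hfg0]; [| exact Heq].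
  pose proof (f_decr (g 0) b Hg0 Hlt). lra.
Qed.

Lemma inverse_continuous_on : continuous_on_set (fun t => 0 <= t) g.
Proof.
  intros t Ht eps Heps. destruct (g_spec t Ht) as [[Hgt _] Hfgt].
  set (e := Rmin (eps / 2) ((g t - a) / 2)).
  assert (He : 0 < e) by (apply Rmin_pos; lra).
  assert (Hea : e <= (g t - a) / 2) by apply Rmin_r.
  assert (Hee : e <= eps / 2) by apply Rmin_l.
  assert (Hl : t < f (g t - e)) by (rewrite <- Hfgt at 1; apply f_decr; lra).
  assert (Hr : f (g t + e) < t) by (rewrite <- Hfgt at 2; apply f_decr; lra).
  exists (Rmin (f (g t - e) - t) (t - f (g t + e))); split; [apply Rmin_pos; lra |].
  intros s Hs Hst.
  pose proof (Rmin_l (f (g t - e) - t) (t - f (g t + e))).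
  pose proof (Rmin_r (f (g t - e) - t) (t - f (g t + e))).
  apply Rabs_def2 in Hst.
  assert (g t - e < g s) by (apply inverse_gt; lra).
  assert (g s < g t + e) by (apply inverse_lt; lra).
  apply Rabs_def1; lra.
Qed.

Lemma inverse_Rmax_continuity_pt (t : R) : continuity_pt (fun s => g (Rmax s 0)) t.
Proof.
  apply (continuity_pt_comp_on_set (fun t => 0 <= t)).
  - exact inverse_continuous_on.
  - apply continuity_pt_Rmax_l.
  - apply Rmax_r.
  - apply filter_forall. intros s. apply Rmax_r.
Qed.

Lemma inverse_Rmax_derive (t d : R) : 0 < t ->
  is_derive f (g t) d -> d <> 0 -> is_derive (fun s => g (Rmax s 0)) t (/ d).
Proof.
  intros Ht Hf Hd. apply (is_derive_inverse f); [apply inverse_Rmax_continuity_pt | | | exact Hd].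
  - apply (filter_imp (fun s => 0 < s)); [| now apply locally_gt].
    intros s Hs. rewrite Rmax_left by lra. apply g_spec. lra.
  - now rewrite Rmax_left by lra.
Qed.

End DecreasingInverse.

(** * Solutions of the SEIR problem *)

Lemma continuous_on_set_ext (D : R -> Prop) (f g : R -> R) :
  (forall x, D x -> f x = g x) -> continuous_on_set D f -> continuous_on_set D g.
Proof.
  intros Hfg Hf x Hx eps Heps. destruct (Hf x Hx eps Heps) as [d [Hd Hfd]].
  exists d; split; [exact Hd |]. intros y Hy Hyx.
  rewrite <- (Hfg x Hx), <- (Hfg y Hy). now apply Hfd.
Qed.

Lemma C1_on_pos_ext (f g f' : R -> R) :
  (forall t, 0 < t -> f t = g t) ->
  C1_on_with (fun t => 0 < t) f f' -> C1_on_with (fun t => 0 < t) g f'.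
Proof.
  intros Hfg Hf t Ht. destruct (Hf t Ht) as [Hd Hc]. split; [| exact Hc].
  apply (is_derive_ext_loc f); [| exact Hd].
  apply (filter_imp (fun s => 0 < s)); [exact Hfg | now apply locally_gt].
Qed.

Lemma SEIR_solution_ext (beta gamma delta S0 E0 I0 R0 : R)
    (S E I Rf S2 E2 I2 R2 : R -> R) :
  (forall t, 0 <= t -> S t = S2 t) -> (forall t, 0 <= t -> E t = E2 t) ->
  (forall t, 0 <= t -> I t = I2 t) -> (forall t, 0 <= t -> Rf t = R2 t) ->
  SEIR_solution beta gamma delta S0 E0 I0 R0 S E I Rf ->
  SEIR_solution beta gamma delta S0 E0 I0 R0 S2 E2 I2 R2.
Proof.
  intros HS HE HI HR
    [CS [CE [CI [CR [[S' [E' [I' [R' [DS [DE [DI [DR Hode]]]]]]]] [S00 [E00 [I00 R00]]]]]]]].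
  assert (Hpos : forall t, 0 < t -> 0 <= t) by (intros; lra).
  refine (conj _ (conj _ (conj _ (conj _ (conj _ _))))).
  - exact (continuous_on_set_ext _ S S2 HS CS).
  - exact (continuous_on_set_ext _ E E2 HE CE).
  - exact (continuous_on_set_ext _ I I2 HI CI).
  - exact (continuous_on_set_ext _ Rf R2 HR CR).
  - exists S', E', I', R'.
    refine (conj _ (conj _ (conj _ (conj _ _)))).
    + apply (C1_on_pos_ext S); auto.
    + apply (C1_on_pos_ext E); auto.
    + apply (C1_on_pos_ext I); auto.
    + apply (C1_on_pos_ext Rf); auto.
    + intros t Ht. rewrite <- HS, <- HE, <- HI by auto. apply Hode, Ht.
  - rewrite <- HS, <- HE, <- HI, <- HR by lra. auto.
Qed.

Lemma SEIR_solution_intro (beta gamma delta : R) (S E I Rf : R -> R) :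
  (forall t, 0 <= t -> continuity_pt S t /\ continuity_pt E t /\
                       continuity_pt I t /\ continuity_pt Rf t) ->
  (forall t, 0 < t -> is_derive S t (- beta * S t * I t)) ->
  (forall t, 0 < t -> is_derive E t (beta * S t * I t - delta * E t)) ->
  (forall t, 0 < t -> is_derive I t (delta * E t - gamma * I t)) ->
  (forall t, 0 < t -> is_derive Rf t (gamma * I t)) ->
  SEIR_solution beta gamma delta (S 0) (E 0) (I 0) (Rf 0) S E I Rf.
Proof.
  intros Hc DS DE DI DR.
  assert (Hc' : forall t, 0 < t -> continuity_pt S t /\ continuity_pt E t /\
                                    continuity_pt I t /\ continuity_pt Rf t)
    by (intros t Ht; apply Hc; lra).
  refine (conj _ (conj _ (conj _ (conj _ (conj _ (conj eq_refl (conj eq_refl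
            (conj eq_refl eq_refl)))))))).
  1-4: apply continuous_on_set_of_continuity_pt; intros t Ht; apply Hc, Ht.
  exists (fun t => - beta * S t * I t), (fun t => beta * S t * I t - delta * E t),
    (fun t => delta * E t - gamma * I t), (fun t => gamma * I t).
  refine (conj _ (conj _ (conj _ (conj _ _)))); [..| intros t Ht; repeat split];
    intros t Ht; split; auto;
    apply continuity_pt_filterlim; destruct (Hc' t Ht) as [CS [CE [CI CR]]];
    repeat first [ apply continuity_pt_minus | apply continuity_pt_mult
                 | apply continuity_pt_const; intros ? ?; reflexivity | assumption ].
Qed.

(** * The explicit solution *)

Section SEIRModel.

Variables (beta gamma delta N K E0 uinf u0 : R) (psi psi' : R -> R).
Hypotheses (Hbeta : 0 < beta) (Hgamma : 0 < gamma)
  (Huinf : 0 < uinf) (Huinf_u0 : uinf < u0) (HK : 0 < K) (HE0 : 0 < E0).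

Definition F (u : R) : R := beta * N - beta * K * u + gamma * ln u.

Hypotheses
  (HF_uinf : F uinf = 0)
  (Hpsi_cont : continuous_on_set (fun u => uinf < u <= u0) psi)
  (Hpsi_pos : forall u, uinf < u <= u0 -> 0 < psi u)
  (Hpsi_derive : forall u, uinf < u < u0 -> is_derive psi u (psi' u))
  (Hpsi_abel : forall u, uinf < u < u0 ->
     psi' u * psi u - (gamma + delta) / u * psi u = - delta * F u / u)
  (Hpsi_u0 : psi u0 = F u0 - beta * E0).

(* [psi] is only given on (uinf, u0]; freezing it at [u0] beyond [u0] makes every
   function below continuous on the open half-line (uinf, +oo), as the mean value
   and intermediate value theorems require at the endpoint [u0]. *)
Definition clamp (x : R) : R := Rmin x u0.
Definition Phi_integrand (x : R) : R := / (clamp x * psi (clamp x)).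
Definition Phi (x : R) : R := RInt Phi_integrand x u0.
Definition J (x : R) : R := RInt (fun v => exp (delta * Phi v)) x u0.

Lemma clamp_id (x : R) : x <= u0 -> clamp x = x.
Proof. apply Rmin_left. Qed.

Lemma clamp_range (x : R) : uinf < x -> uinf < clamp x <= u0.
Proof. unfold clamp, Rmin. destruct Rle_dec; lra. Qed.

Lemma Phi_integrand_pos (x : R) : uinf < x -> 0 < Phi_integrand x.
Proof.
  intros Hx. pose proof (clamp_range x Hx). pose proof (Hpsi_pos _ (clamp_range x Hx)).
  apply Rinv_0_lt_compat, Rmult_lt_0_compat; lra.
Qed.

Lemma psi_clamp_continuity_pt (x : R) : uinf < x -> continuity_pt (fun y => psi (clamp y)) x.
Proof.
  intros Hx. apply (continuity_pt_comp_on_set (fun u => uinf < u <= u0)).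
  - exact Hpsi_cont.
  - apply continuity_pt_Rmin_l.
  - now apply clamp_range.
  - apply (filter_imp (fun y => uinf < y)); [exact clamp_range | now apply locally_gt].
Qed.

Lemma Phi_integrand_continuity_pt (x : R) : uinf < x -> continuity_pt Phi_integrand x.
Proof.
  intros Hx. pose proof (Phi_integrand_pos x Hx) as Hh. unfold Phi_integrand in *.
  apply continuity_pt_inv.
  - apply continuity_pt_mult; [apply continuity_pt_Rmin_l | now apply psi_clamp_continuity_pt].
  - intros E. rewrite E, Rinv_0 in Hh. lra.
Qed.

Lemma Phi_derive (x : R) : uinf < x -> is_derive Phi x (- Phi_integrand x).
Proof. apply is_derive_RInt_lower; [exact Phi_integrand_continuity_pt | exact Huinf_u0]. Qed.

Lemma Phi_continuity_pt (x : R) : uinf < x -> continuity_pt Phi x.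
Proof.
  intros Hx. now apply (continuity_pt_of_is_derive _ _ _ (Phi_derive x Hx)).
Qed.

Lemma Phi_decr (x y : R) : uinf < x -> x < y -> Phi y < Phi x.
Proof.
  apply (decreasing_of_derive_neg Phi (fun z => - Phi_integrand z)); [exact Phi_derive |].
  intros z Hz. pose proof (Phi_integrand_pos z Hz). lra.
Qed.

Lemma Phi_u0 : Phi u0 = 0.
Proof. unfold Phi. now rewrite RInt_point. Qed.

Lemma exp_Phi_continuity_pt (x : R) : uinf < x -> continuity_pt (fun v => exp (delta * Phi v)) x.
Proof.
  intros Hx. apply (continuity_pt_comp (fun v => delta * Phi v) exp).
  - apply continuity_pt_mult; [apply continuity_pt_const; intros ? ?; reflexivity |].
    now apply Phi_continuity_pt.
  - apply derivable_continuous_pt, derivable_pt_exp.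
Qed.

Lemma J_derive (x : R) : uinf < x -> is_derive J x (- exp (delta * Phi x)).
Proof.
  apply (is_derive_RInt_lower (fun v => exp (delta * Phi v)) uinf);
    [exact exp_Phi_continuity_pt | exact Huinf_u0].
Qed.

Lemma J_continuity_pt (x : R) : uinf < x -> continuity_pt J x.
Proof.
  intros Hx. now apply (continuity_pt_of_is_derive _ _ _ (J_derive x Hx)).
Qed.

Lemma J_nonneg (u : R) : uinf < u <= u0 -> 0 <= J u.
Proof.
  intros Hu. apply RInt_ge_0; [lra | |].
  - apply (ex_RInt_continuity_pt_gt _ uinf); [exact exp_Phi_continuity_pt | lra | lra].
  - intros x _. apply Rlt_le, exp_pos.
Qed.

Lemma F_derive (x : R) : 0 < x -> is_derive F x (- beta * K + gamma / x).
Proof. intros Hx. unfold F. auto_derive; [lra | field; lra]. Qed.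

(* At [x = U t] (below), [(F x - psi x) / beta] is [E(t)], and the constancy of [conserved]
   is the variation-of-constants formula for [E' = - delta E + beta S I]. *)
Definition conserved (x : R) : R :=
  (F (clamp x) - psi (clamp x)) / beta * exp (delta * Phi x) - K * J x.

Lemma conserved_continuity_pt (x : R) : uinf < x -> continuity_pt conserved x.
Proof.
  intros Hx. pose proof (clamp_range x Hx). unfold conserved.
  repeat first
    [ apply continuity_pt_minus | apply continuity_pt_mult
    | apply continuity_pt_div; [| | lra]
    | apply continuity_pt_const; intros ? ?; reflexivity
    | now apply psi_clamp_continuity_pt | now apply J_continuity_pt
    | now apply exp_Phi_continuity_pt ].
  apply (continuity_pt_comp clamp F); [apply continuity_pt_Rmin_l |].
  apply (continuity_pt_of_is_derive _ _ _ (F_derive (clamp x) ltac:(lra))).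
Qed.

Lemma conserved_derive (x : R) : uinf < x < u0 -> is_derive conserved x 0.
Proof.
  intros Hx. pose proof (Hpsi_pos x ltac:(lra)) as Hpsi.
  apply (is_derive_ext_loc
           (fun y => (F y - psi y) / beta * exp (delta * Phi y) - K * J y)).
  { apply (filter_imp (fun y => y < u0)); [| now apply (locally_interval _ x m_infty u0)].
    intros y Hy. unfold conserved. now rewrite clamp_id by lra. }
  auto_derive.
  { repeat split; eexists;
      [apply F_derive | apply Hpsi_derive | apply Phi_derive | apply J_derive]; lra. }
  rewrite (is_derive_unique (fun y : R => F y) _ _ (F_derive x ltac:(lra))),
    (is_derive_unique (fun y : R => psi y) _ _ (Hpsi_derive x Hx)),
    (is_derive_unique (fun y : R => Phi y) _ _ (Phi_derive x ltac:(lra))),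
    (is_derive_unique (fun y : R => J y) _ _ (J_derive x ltac:(lra))).
  unfold Phi_integrand. rewrite !clamp_id by lra.
  assert (Hpsi' : psi' x = ((gamma + delta) / x * psi x - delta * F x / x) / psi x).
  { assert (Habel : psi' x * psi x = (gamma + delta) / x * psi x - delta * F x / x)
      by (pose proof (Hpsi_abel x Hx); unfold Rdiv in *; lra).
    apply (Rmult_eq_reg_r (psi x)); [rewrite Habel; field | ]; lra. }
  rewrite Hpsi'. field. lra.
Qed.

Lemma conserved_u0 : conserved u0 = E0.
Proof.
  unfold conserved. rewrite clamp_id, Phi_u0, Hpsi_u0 by lra.
  unfold J. rewrite RInt_point, Rmult_0_r, exp_0. change (zero : R) with 0.
  field. lra.
Qed.

Lemma conservation_law (u : R) : uinf < u <= u0 ->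
  (F u - psi u) / beta * exp (delta * Phi u) = E0 + K * J u.
Proof.
  intros Hu. rewrite <- conserved_u0.
  rewrite <- (eq_of_derive_zero conserved uinf u0 conserved_derive
                (fun x Hx => conserved_continuity_pt x (proj1 Hx)) u Hu).
  unfold conserved. rewrite clamp_id by lra. ring.
Qed.

Lemma psi_lt_F (u : R) : uinf < u <= u0 -> psi u < F u.
Proof.
  intros Hu. pose proof (conservation_law u Hu). pose proof (J_nonneg u Hu).
  pose proof (exp_pos (delta * Phi u)).
  assert (0 < (F u - psi u) / beta) by (apply (Rmult_lt_reg_r (exp (delta * Phi u))); nra).
  assert (0 < F u - psi u) by (apply (Rmult_lt_reg_r (/ beta)); [apply Rinv_0_lt_compat |]; lra).
  lra.
Qed.

(* [F] is concave and vanishes at [uinf], so it lies below its tangent there. *)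
Lemma F_le_tangent (u : R) : 0 < u -> F u <= (gamma / uinf - beta * K) * (u - uinf).
Proof.
  intros Hu.
  assert (Hln : ln (u / uinf) <= u / uinf - 1).
  { pose proof (exp_ineq1_le (ln (u / uinf))).
    rewrite exp_ln in H by (apply Rdiv_lt_0_compat; lra). lra. }
  replace (F u) with (F u - F uinf) by (rewrite HF_uinf; ring).
  unfold F. rewrite ln_div in Hln by lra.
  replace ((gamma / uinf - beta * K) * (u - uinf))
    with (- beta * K * (u - uinf) + gamma * (u / uinf - 1)) by (field; lra).
  apply Rmult_le_compat_l with (r := gamma) in Hln; lra.
Qed.

Lemma tangent_slope_pos : 0 < gamma / uinf - beta * K.
Proof.
  assert (Hu0 : uinf < u0 <= u0) by lra.
  pose proof (psi_lt_F u0 Hu0). pose proof (Hpsi_pos u0 Hu0).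
  pose proof (F_le_tangent u0 ltac:(lra)). nra.
Qed.

(* Since [psi < F] lies below the tangent of [F] at [uinf], the integrand of [Phi]
   dominates [1 / (u0 c (x - uinf))], whose integral diverges logarithmically. *)
Lemma Phi_ge_log (u : R) : uinf < u <= u0 ->
  (ln (u0 - uinf) - ln (u - uinf)) / (u0 * (gamma / uinf - beta * K)) <= Phi u.
Proof.
  intros Hu. pose proof tangent_slope_pos as Hc.
  set (c := gamma / uinf - beta * K) in *.
  set (g := fun x => / (u0 * c * (x - uinf))).
  assert (Hg : forall x, uinf < x -> continuity_pt g x).
  { intros x Hx. apply continuity_pt_filterlim, (ex_derive_continuous (V := R_NormedModule)).
    unfold g. auto_derive. apply Rgt_not_eq, Rmult_lt_0_compat; [nra | lra]. }
  assert (Hint : is_RInt g u u0 ((ln (u0 - uinf) - ln (u - uinf)) / (u0 * c))).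
  { replace ((ln (u0 - uinf) - ln (u - uinf)) / (u0 * c))
      with (minus (ln (u0 - uinf) / (u0 * c)) (ln (u - uinf) / (u0 * c)))
      by (unfold minus, plus, opp; simpl; field; nra).
    apply (is_RInt_derive (V := R_CompleteNormedModule) (fun x => ln (x - uinf) / (u0 * c)));
      rewrite Rmin_left, Rmax_right by lra; intros x Hx.
    - unfold g. auto_derive; [lra | field; split; nra].
    - apply continuity_pt_filterlim, Hg. lra. }
  rewrite <- (is_RInt_unique _ _ _ _ Hint). unfold Phi.
  apply RInt_le; [lra | eexists; exact Hint | |].
  - apply (ex_RInt_continuity_pt_gt Phi_integrand uinf);
      [exact Phi_integrand_continuity_pt | lra | lra].
  - intros x Hx. assert (Hx' : uinf < x <= u0) by lra.
    pose proof (psi_lt_F x Hx'). pose proof (Hpsi_pos x Hx').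
    pose proof (F_le_tangent x ltac:(lra)) as HF. fold c in HF.
    unfold g, Phi_integrand. rewrite clamp_id by lra.
    apply Rinv_le_contravar; [nra |].
    apply Rle_trans with (u0 * psi x); [apply Rmult_le_compat_r; lra |].
    rewrite Rmult_assoc. apply Rmult_le_compat_l; lra.
Qed.

Lemma Phi_unbounded (t : R) : exists u, uinf < u <= u0 /\ t <= Phi u.
Proof.
  pose proof tangent_slope_pos as Hc.
  set (c := gamma / uinf - beta * K) in *.
  assert (Hcu : 0 < u0 * c) by nra.
  set (e := exp (- Rmax t 0 * (u0 * c))).
  assert (He : 0 < e <= 1).
  { split; [apply exp_pos |]. unfold e. rewrite <- exp_0.
    destruct (Rle_lt_or_eq_dec _ _ (Rmax_r t 0)) as [Ht | Ht].
    - left. apply exp_increasing. nra.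
    - right. rewrite <- Ht. f_equal. ring. }
  exists (uinf + (u0 - uinf) * e). split; [split; nra |].
  eapply Rle_trans; [| apply Phi_ge_log; split; nra].
  replace (uinf + (u0 - uinf) * e - uinf) with ((u0 - uinf) * e) by ring.
  rewrite ln_mult by lra. unfold e. rewrite ln_exp. fold c.
  replace ((ln (u0 - uinf) - (ln (u0 - uinf) + - Rmax t 0 * (u0 * c))) / (u0 * c))
    with (Rmax t 0) by (field; lra).
  apply Rmax_l.
Qed.

Lemma phi_eq_Phi (u : R) : uinf < u <= u0 -> phi psi u0 u = Phi u.
Proof.
  intros Hu. apply RInt_ext. rewrite Rmin_left, Rmax_right by lra.
  intros x Hx. unfold Phi_integrand. now rewrite clamp_id by lra.
Qed.

Lemma phi_inv_spec (t : R) : 0 <= t ->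
  uinf < phi_inv psi uinf u0 t <= u0 /\ Phi (phi_inv psi uinf u0 t) = t.
Proof.
  intros Ht. unfold phi_inv.
  destruct (epsilon_spec (inhabits 0) (fun u => uinf < u <= u0 /\ phi psi u0 u = t))
    as [Hu Hphi].
  - destruct (continuous_onto_nonneg Phi uinf u0 Phi_continuity_pt Phi_u0 Phi_unbounded t Ht)
      as [w [Hw HPhi]].
    exists w. now rewrite phi_eq_Phi.
  - now rewrite <- phi_eq_Phi.
Qed.

Definition U (t : R) : R := phi_inv psi uinf u0 (Rmax t 0).

Lemma U_range (t : R) : uinf < U t <= u0.
Proof. apply phi_inv_spec, Rmax_r. Qed.

Lemma Phi_U (t : R) : 0 <= t -> Phi (U t) = t.
Proof. intros Ht. unfold U. rewrite Rmax_left by lra. now apply phi_inv_spec. Qed.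

Lemma U_0 : U 0 = u0.
Proof.
  unfold U. rewrite Rmax_left by lra.
  now apply (inverse_0 Phi _ uinf u0 Phi_decr Phi_u0 phi_inv_spec).
Qed.

Lemma U_continuity_pt (t : R) : continuity_pt U t.
Proof. exact (inverse_Rmax_continuity_pt Phi _ uinf u0 Phi_decr phi_inv_spec t). Qed.

Lemma U_derive (t : R) : 0 < t -> is_derive U t (- U t * psi (U t)).
Proof.
  intros Ht. pose proof (U_range t) as HU. pose proof (Hpsi_pos _ HU).
  replace (- U t * psi (U t)) with (/ - Phi_integrand (U t))
    by (unfold Phi_integrand; rewrite clamp_id by lra; field; split; lra).
  apply (inverse_Rmax_derive Phi _ uinf u0 Phi_decr phi_inv_spec); [exact Ht | |].
  - replace (phi_inv psi uinf u0 t) with (U t) by (unfold U; now rewrite Rmax_left by lra).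
    apply Phi_derive. lra.
  - pose proof (Phi_integrand_pos (U t) ltac:(lra)). lra.
Qed.

Definition susceptible (t : R) : R := K * U t.
Definition exposed (t : R) : R :=
  E0 * exp (- delta * t) + K * exp (- delta * t) * J (U t).
Definition infectious (t : R) : R :=
  N - K * U t + gamma / beta * ln (U t) - E0 * exp (- delta * t)
  - K * exp (- delta * t) * J (U t).
Definition removed (t : R) : R := - (gamma / beta) * ln (U t).

Lemma infectious_eq (t : R) : 0 <= t -> infectious t = psi (U t) / beta.
Proof.
  intros Ht. pose proof (conservation_law (U t) (U_range t)) as Hcons.
  rewrite Phi_U in Hcons by exact Ht.
  unfold infectious. replace (- delta * t) with (- (delta * t)) by ring. rewrite exp_Ropp.
  replace E0 with ((F (U t) - psi (U t)) / beta * exp (delta * t) - K * J (U t)) by lra.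
  unfold F. field. split; (apply Rgt_not_eq, exp_pos || lra).
Qed.

Lemma susceptible_derive (t : R) : 0 < t ->
  is_derive susceptible t (- beta * susceptible t * infectious t).
Proof.
  intros Ht. rewrite infectious_eq by lra.
  replace (- beta * susceptible t * (psi (U t) / beta)) with (K * (- U t * psi (U t)))
    by (unfold susceptible; field; lra).
  apply is_derive_scal, U_derive, Ht.
Qed.

Lemma removed_derive (t : R) : 0 < t -> is_derive removed t (gamma * infectious t).
Proof.
  intros Ht. pose proof (U_range t). rewrite infectious_eq by lra. unfold removed.
  auto_derive; [split; [eexists; now apply U_derive | lra] |].
  rewrite (is_derive_unique (fun y : R => U y) _ _ (U_derive t Ht)). field. split; lra.
Qed.

Lemma exposed_derive (t : R) : 0 < t ->
  is_derive exposed t (beta * susceptible t * infectious t - delta * exposed t).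
Proof.
  intros Ht. pose proof (U_range t). rewrite infectious_eq by lra.
  unfold susceptible, exposed. auto_derive.
  { split; [eexists; apply J_derive; lra | split; [eexists; now apply U_derive | easy]]. }
  rewrite (is_derive_unique (fun y : R => U y) _ _ (U_derive t Ht)),
    (is_derive_unique (fun y : R => J y) _ _ (J_derive (U t) ltac:(lra))), Phi_U by lra.
  replace (exp (- delta * t)) with (/ exp (delta * t))
    by (rewrite <- exp_Ropp; f_equal; ring).
  field. repeat split; (apply Rgt_not_eq, exp_pos || lra).
Qed.

Lemma infectious_derive (t : R) : 0 < t ->
  is_derive infectious t (delta * exposed t - gamma * infectious t).
Proof.
  intros Ht. pose proof (U_range t).
  rewrite (infectious_eq t) by lra. unfold infectious, exposed. auto_derive.
  { repeat split; try (eexists; now apply U_derive); try lra.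
    eexists; apply J_derive; lra. }
  rewrite (is_derive_unique (fun y : R => U y) _ _ (U_derive t Ht)),
    (is_derive_unique (fun y : R => J y) _ _ (J_derive (U t) ltac:(lra))), Phi_U by lra.
  replace (exp (- delta * t)) with (/ exp (delta * t))
    by (rewrite <- exp_Ropp; f_equal; ring).
  field. repeat split; (apply Rgt_not_eq, exp_pos || lra).
Qed.

Lemma solution_continuity_pt (t : R) :
  continuity_pt susceptible t /\ continuity_pt exposed t /\
  continuity_pt infectious t /\ continuity_pt removed t.
Proof.
  pose proof (U_range t). pose proof (U_continuity_pt t) as CU.
  assert (CJ : continuity_pt (fun s => J (U s)) t)
    by (apply (continuity_pt_comp U J); [exact CU | apply J_continuity_pt; lra]).
  assert (CL : continuity_pt (fun s => ln (U s)) t)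
    by (apply (continuity_pt_comp U ln);
        [exact CU | apply continuity_pt_filterlim, continuous_ln; lra]).
  assert (CE : continuity_pt (fun s => exp (- delta * s)) t)
    by (apply derivable_continuous_pt; reg).
  unfold susceptible, exposed, infectious, removed.
  repeat split;
    repeat first [ apply continuity_pt_minus | apply continuity_pt_plus | apply continuity_pt_mult
                 | apply continuity_pt_const; intros ? ?; reflexivity | assumption ].
Qed.

Lemma SEIR_solution_phi_inv (S0 I0 R0 : R) :
  K * u0 = S0 -> N - K * u0 + gamma / beta * ln u0 - E0 = I0 ->
  - (gamma / beta) * ln u0 = R0 ->
  let finv := phi_inv psi uinf u0 in
  let Jt := fun t => RInt (fun v => exp (delta * phi psi u0 v)) (finv t) u0 in
  SEIR_solution beta gamma delta S0 E0 I0 R0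
    (fun t => K * finv t)
    (fun t => E0 * exp (- delta * t) + K * exp (- delta * t) * Jt t)
    (fun t => N - K * finv t + gamma / beta * ln (finv t) - E0 * exp (- delta * t)
              - K * exp (- delta * t) * Jt t)
    (fun t => - (gamma / beta) * ln (finv t)).
Proof.
  intros HS0 HI0 HR0 finv Jt.
  assert (HU : forall t, 0 <= t -> U t = finv t)
    by (intros t Ht; unfold U; now rewrite Rmax_left).
  assert (HJ : forall t, 0 <= t -> J (U t) = Jt t).
  { intros t Ht. pose proof (U_range t). unfold Jt. rewrite <- HU by exact Ht.
    apply RInt_ext. rewrite Rmin_left, Rmax_right by lra.
    intros v Hv. now rewrite phi_eq_Phi by lra. }
  assert (Hsol := SEIR_solution_intro beta gamma delta susceptible exposed infectious removed
    (fun t _ => solution_continuity_pt t)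
    susceptible_derive exposed_derive infectious_derive removed_derive).
  replace (susceptible 0) with S0 in Hsol by (unfold susceptible; now rewrite U_0).
  replace (exposed 0) with E0 in Hsol
    by (unfold exposed; rewrite Rmult_0_r, exp_0, U_0; unfold J; rewrite RInt_point;
        change (zero : R) with 0; ring).
  replace (infectious 0) with I0 in Hsol
    by (unfold infectious; rewrite Rmult_0_r, exp_0, U_0; unfold J; rewrite RInt_point;
        change (zero : R) with 0; rewrite <- HI0; ring).
  replace (removed 0) with R0 in Hsol by (unfold removed; now rewrite U_0).
  revert Hsol. apply SEIR_solution_ext; intros t Ht;
    unfold susceptible, exposed, infectious, removed; now rewrite ?HJ, ?HU.
Qed.

End SEIRModel.

Theorem theorem4
  (beta gamma delta St Et It Rt alpha : R) (psi psi' : R -> R)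
  (Hbeta : 0 < beta) (Hgamma : 0 < gamma) (Hdelta : 0 < delta)
  (HN : 0 < St + Et + It + Rt)
  (A1 : 0 < It)
  (A2 : Et > (gamma / delta) * It)
  (A3 : St > delta * Et / (beta * It))
  (A4a : 0 <= Rt)
  (A4b : St + Et + It + Rt > St * exp ((beta / gamma) * Rt) + Rt)
  (* alpha: the unique solution in (Rt, N) of
     x = N - St e^{(beta/gamma) Rt} e^{-(beta/gamma) x} *)
  (Halpha_int : Rt < alpha < St + Et + It + Rt)
  (Halpha_eq : alpha = (St + Et + It + Rt)
      - St * exp ((beta / gamma) * Rt) * exp (- (beta / gamma) * alpha))
  (A5 : St < (gamma / beta) * exp ((beta / gamma) * (alpha - Rt)))
  (* psi: the solution of the Abel equation on (u_inf, u0] *)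
  (Hpsi_cont : continuous_on_set
      (fun u => exp (- (beta / gamma) * alpha) < u <= exp (- (beta / gamma) * Rt)) psi)
  (Hpsi_pos : forall u,
      exp (- (beta / gamma) * alpha) < u <= exp (- (beta / gamma) * Rt) -> 0 < psi u)
  (Hpsi_C1 : C1_on_with
      (fun u => exp (- (beta / gamma) * alpha) < u < exp (- (beta / gamma) * Rt)) psi psi')
  (Hpsi_abel : forall u,
      exp (- (beta / gamma) * alpha) < u < exp (- (beta / gamma) * Rt) ->
      psi' u * psi u - (gamma + delta) / u * psi u =
      - delta * (beta * (St + Et + It + Rt)
                 - beta * St * exp ((beta / gamma) * Rt) * u + gamma * ln u) / u)
  (Hpsi_init : psi (exp (- (beta / gamma) * Rt)) = beta * It) :
  let N := St + Et + It + Rt in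
  let u0 := exp (- (beta / gamma) * Rt) in
  let uinf := exp (- (beta / gamma) * alpha) in
  let finv := phi_inv psi uinf u0 in
  let Jt := fun t => RInt (fun v => exp (delta * phi psi u0 v)) (finv t) u0 in
  let S := fun t => St * exp ((beta / gamma) * Rt) * finv t in
  let E := fun t => Et * exp (- delta * t)
             + St * exp ((beta / gamma) * Rt) * exp (- delta * t) * Jt t in
  let I := fun t => N - St * exp ((beta / gamma) * Rt) * finv t
             + (gamma / beta) * ln (finv t) - Et * exp (- delta * t)
             - St * exp ((beta / gamma) * Rt) * exp (- delta * t) * Jt t in
  let Rf := fun t => - (gamma / beta) * ln (finv t) in
  SEIR_solution beta gamma delta St Et It Rt S E I Rf.
Proof.
  intros N u0 uinf finv Jt S E I Rf.
  assert (Hbg : 0 < beta / gamma) by (apply Rdiv_lt_0_compat; lra).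
  assert (Hu : uinf < u0) by (apply exp_increasing; nra).
  assert (HEt : 0 < Et).
  { enough (0 < gamma / delta * It) by lra.
    apply Rmult_lt_0_compat; [apply Rdiv_lt_0_compat |]; lra. }
  assert (HSt : 0 < St).
  { enough (0 < delta * Et / (beta * It)) by lra.
    apply Rdiv_lt_0_compat; apply Rmult_lt_0_compat; lra. }
  assert (HKu0 : St * exp ((beta / gamma) * Rt) * u0 = St).
  { unfold u0. rewrite Rmult_assoc, <- exp_plus.
    replace (beta / gamma * Rt + - (beta / gamma) * Rt) with 0 by ring.
    rewrite exp_0. ring. }
  assert (Hlnu0 : ln u0 = - (beta / gamma) * Rt) by apply ln_exp.
  apply (SEIR_solution_phi_inv beta gamma delta N (St * exp ((beta / gamma) * Rt)) Et
           uinf u0 psi psi'); try assumption.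
  - apply exp_pos.
  - apply Rmult_lt_0_compat; [lra | apply exp_pos].
  - unfold F, uinf, N. rewrite ln_exp.
    transitivity (beta * ((St + Et + It + Rt) - St * exp (beta / gamma * Rt)
                          * exp (- (beta / gamma) * alpha) - alpha)); [field; lra |].
    rewrite <- Halpha_eq. ring.
  - intros u Hu'. exact (proj1 (Hpsi_C1 u Hu')).
  - intros u Hu'. rewrite Hpsi_abel by exact Hu'. unfold F, N, Rdiv. ring.
  - unfold F, N, u0. rewrite Hpsi_init. fold u0. rewrite Rmult_assoc, HKu0, Hlnu0. field. lra.
  - rewrite HKu0, Hlnu0. unfold N. field. lra.
  - rewrite Hlnu0. field. lra.
Qed.
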